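(* Let $N\ge4$, $M\ge1$, $\mathcal I_N=\{(i,j):i,j\in\{1,\dots,N\},i\ne j\}$, and for each $(i,j)\in\mathcal I_N$ let $Y_{ij}\in\{0,\dots,M\}$ and $X_{ij}\in\mathbb R^k$. Suppose that, conditional on $\mathbf X=(X_{ij})$ and fixed effects $\mathbf F=((\alpha_i,\gamma_i))_{i=1}^N$, the $Y_{ij}$ are independent across dyads with \[ P(Y_{ij}=m\mid X_{ij},F_i,F_j)=\begin{cases}1-\Lambda(X_{ij}'\beta_0+\alpha_i+\gamma_j-\lambda_{10}), & m=0,\\ \Lambda(X_{ij}'\beta_0+\alpha_i+\gamma_j-\lambda_{m0})-\Lambda(X_{ij}'\beta_0+\alpha_i+\gamma_j-\lambda_{m+1,0}), & 1\le m\le M-1,\\ \Lambda(X_{ij}'\beta_0+\alpha_i+\gamma_j-\lambda_{M0}), & m=M,\end{cases} \] where $\Lambda(z)=e^z/(1+e^z)$, $\beta_0\in\mathbb R^k$, and $\lambda_{10}\le\lambda_{20}\le\dots\le\lambda_{M0}$ are common thresholds. Let $D_{ij}(m)=\mathbf 1\{Y_{ij}\ge m\}$. For a tetrad $\sigma=(i_1,i_2,j_1,j_2)$ of four distinct nodes and a cutoff vector $\mathbf m=(m_{11},m_{12},m_{21},m_{22})\in\{1,\dots,M\}^4$ define \[ Z_\sigma(\mathbf m)=\tfrac12\Big((D_{i_1j_1}(m_{11})-D_{i_1j_2}(m_{12}))-(D_{i_2j_1}(m_{21})-D_{i_2j_2}(m_{22}))\Big), \] $X_\sigma=(X_{i_1j_1},X_{i_1j_2},X_{i_2j_1},X_{i_2j_2})$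 and $r_\sigma=(X_{i_1j_1}-X_{i_1j_2})-(X_{i_2j_1}-X_{i_2j_2})$. Then \[ P\big(Z_\sigma(\mathbf m)=1\mid Z_\sigma(\mathbf m)\in\{-1,+1\},X_\sigma\big)=\Lambda\big(r_\sigma'\beta_0-\lambda_0(\mathbf m)\big), \] where $\lambda_0(\mathbf m)=(\lambda_{m_{11}0}-\lambda_{m_{12}0})-(\lambda_{m_{21}0}-\lambda_{m_{22}0})$.
   Context: $\alpha_i$ is a sender fixed effect and $\gamma_j$ a receiver fixed effect, both constant across outcome categories. *)

From HB Require Import structures.
From mathcomp Require Import all_boot all_order all_algebra.
From mathcomp Require Import reals.
From mathcomp Require Import sequences exp.
Set Implicit Arguments. Unset Strict Implicit. Unset Printing Implicit Defensive.
Import Order.TTheory GRing.Theory Num.Theory.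
Local Open Scope ring_scope.

Section Defs.
Variable R : realType.

Definition Lambda (z : R) : R := expR z / (1 + expR z).

Definition dotv (k : nat) (x y : 'rV[R]_k) : R := \sum_(l < k) x 0 l * y 0 l.

Variables (N M k : nat).

Definition dyad := {p : 'I_N * 'I_N | p.1 != p.2}.

Definition outcome := {ffun dyad -> 'I_M.+1}.

Variables (X : 'I_N -> 'I_N -> 'rV[R]_k) (alpha gamma : 'I_N -> R)
          (beta0 : 'rV[R]_k) (lam : nat -> R).
(* lam m = lambda_{m0}, used for 1 <= m <= M *)

Definition index_ij (i j : 'I_N) : R := dotv (X i j) beta0 + alpha i + gamma j.

Definition ologit_pmf (i j : 'I_N) (m : 'I_M.+1) : R :=
  let v := index_ij i j in
  if (m == 0 :> nat) then 1 - Lambda (v - lam 1)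
  else if (m == M :> nat) then Lambda (v - lam M)
  else Lambda (v - lam m) - Lambda (v - lam m.+1).

(* joint conditional law given (X,F): independent across dyads *)
Definition law (w : outcome) : R :=
  \prod_(d : dyad) ologit_pmf (val d).1 (val d).2 (w d).

Definition Pr (E : pred outcome) : R := \sum_(w | E w) law w.

Definition condPr (A B : pred outcome) : R :=
  Pr (fun w => A w && B w) / Pr B.

(* Y_ij as a natural number (0 on the diagonal, never used) *)
Definition Yv (w : outcome) (i j : 'I_N) : nat :=
  oapp (fun d : dyad => nat_of_ord (w d)) 0%N (insub (i, j)).

Definition Dv (w : outcome) (i j : 'I_N) (m : nat) : R := (m <= Yv w i j)%N%:R.

Definition Zsig (i1 i2 j1 j2 : 'I_N) (m11 m12 m21 m22 : nat) (w : outcome) : R :=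
  2^-1 * ((Dv w i1 j1 m11 - Dv w i1 j2 m12) - (Dv w i2 j1 m21 - Dv w i2 j2 m22)).

Definition rsig (i1 i2 j1 j2 : 'I_N) : 'rV[R]_k :=
  (X i1 j1 - X i1 j2) - (X i2 j1 - X i2 j2).

Definition lam0 (m11 m12 m21 m22 : nat) : R :=
  (lam m11 - lam m12) - (lam m21 - lam m22).

End Defs.

From HB Require Import structures.
From mathcomp Require Import all_boot all_order all_algebra.
From mathcomp Require Import reals.
From mathcomp Require Import sequences exp.
From mathcomp Require Import ring lra.
Set Implicit Arguments. Unset Strict Implicit. Unset Printing Implicit Defensive.
Import Order.TTheory GRing.Theory Num.Theory.
Local Open Scope ring_scope.

(* Telescoping the ordered-logit pmf gives P(Y_ij >= m) = Lambda(v_ij - lambda_m),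
   where v_ij = X_ij'beta0 + alpha_i + gamma_j.  The events Z = 1 and Z = -1 are
   the indicator patterns (1,0,0,1) and (0,1,1,0) on the four dyads of the tetrad,
   whose outcomes are independent.  Since Lambda(x) / (1 - Lambda(x)) = exp(x), the
   odds of the first pattern against the second are exp(x11 - x12 - x21 + x22)
   with x_ab = v_(i_a j_b) - lambda_(m_ab), and there the fixed effects cancel. *)

Section ProductMeasure.
Variables (R : comPzSemiRingType) (I J : finType) (p : I -> J -> R).

Lemma sum_prod_forall (Q : I -> pred J) :
  \sum_(f : {ffun I -> J} | [forall i, Q i (f i)]) \prod_i p i (f i)
  = \prod_i \sum_(j | Q i j) p i j.
Proof. by rewrite bigA_distr_big_dep. Qed.

Lemma all_pairs_forall (s : seq (I * pred J)) (f : I -> J) :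
  all (fun iP => iP.2 (f iP.1)) s
  = [forall i, all (fun iP => (iP.1 == i) ==> iP.2 (f i)) s].
Proof.
elim: s => [|[i0 P0] s IHs] /=; first by apply/esym/forallP.
rewrite IHs; apply/andP/forallP => [[P0f /forallP s_f] i | s_f].
  by rewrite s_f andbT; apply/implyP => /eqP <-.
split; last by apply/forallP => i; case/andP: (s_f i).
by case/andP: (s_f i0); rewrite eqxx.
Qed.

Hypothesis p_sum1 : forall i, \sum_j p i j = 1.

Lemma prod_sum_all_pairs (s : seq (I * pred J)) : uniq (unzip1 s) ->
  \prod_i \sum_(j | all (fun iP => (iP.1 == i) ==> iP.2 j) s) p i j
  = \prod_(iP <- s) \sum_(j | iP.2 j) p iP.1 j.
Proof.
elim: s => [_ | [i0 P0] s IHs /= /andP[i0_notin_s uniq_s]].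
  by rewrite big_nil big1.
have s_free_at_i0 j : all (fun iP => (iP.1 == i0) ==> iP.2 j) s.
  move: i0_notin_s; rewrite -has_pred1 has_map -all_predC.
  by apply: sub_all => iP /= /negbTE; rewrite eq_sym => ->.
rewrite big_cons -IHs // (bigD1 i0) //= [in RHS](bigD1 i0) //=.
rewrite (eq_bigl _ _ s_free_at_i0) p_sum1 mul1r; congr (_ * _).
  by apply: eq_bigl => j; rewrite eqxx s_free_at_i0 andbT.
by apply: eq_bigr => i; rewrite eq_sym => /negbTE ->.
Qed.

Lemma sum_prod_all_pairs (s : seq (I * pred J)) : uniq (unzip1 s) ->
  \sum_(f : {ffun I -> J} | all (fun iP => iP.2 (f iP.1)) s) \prod_i p i (f i)
  = \prod_(iP <- s) \sum_(j | iP.2 j) p iP.1 j.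
Proof.
move=> uniq_s; rewrite -prod_sum_all_pairs // -sum_prod_forall.
by apply: eq_bigl => f; rewrite all_pairs_forall.
Qed.
End ProductMeasure.

Section Logistic.
Variable R : realType.

Lemma Lambda_gt0 (x : R) : 0 < Lambda x.
Proof. by rewrite divr_gt0 ?addr_gt0 ?expR_gt0. Qed.

Lemma oneBLambda (x : R) : 1 - Lambda x = (1 + expR x)^-1.
Proof.
have Ex_gt0 := expR_gt0 x.
by rewrite /Lambda; field; rewrite gt_eqF ?addr_gt0.
Qed.

Lemma oneBLambda_gt0 (x : R) : 0 < 1 - Lambda x.
Proof. by rewrite oneBLambda invr_gt0 addr_gt0 ?expR_gt0. Qed.

Lemma LambdaE (x : R) : Lambda x = expR x * (1 - Lambda x).
Proof. by rewrite oneBLambda. Qed.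

Lemma oneBLambdaE (x : R) : 1 - Lambda x = expR (- x) * Lambda x.
Proof. by rewrite {2}LambdaE mulrA -expRD addNr expR0 mul1r. Qed.

Lemma Lambda_odds (a b x : R) : 0 < b -> a = expR x * b -> a / (a + b) = Lambda x.
Proof.
move=> b_gt0 ->; have Ex_gt0 := expR_gt0 x.
by rewrite /Lambda; field; rewrite !gt_eqF ?addr_gt0 ?mulr_gt0.
Qed.

Lemma Lambda_odds_ratio (x1 x2 x3 x4 : R) :
  let a := Lambda x1 * (1 - Lambda x2) * (1 - Lambda x3) * Lambda x4 in
  let b := (1 - Lambda x1) * Lambda x2 * Lambda x3 * (1 - Lambda x4) in
  a / (a + b) = Lambda (x1 - x2 - x3 + x4).
Proof.
move=> a b; apply: Lambda_odds; rewrite {}/a {}/b.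
  exact: mulr_gt0 (mulr_gt0 (mulr_gt0 (oneBLambda_gt0 _) (Lambda_gt0 _)) (Lambda_gt0 _))
    (oneBLambda_gt0 _).
rewrite {1}(LambdaE x1) {1}(oneBLambdaE x2) {1}(oneBLambdaE x3) {1}(LambdaE x4).
by rewrite !expRD; ring.
Qed.

End Logistic.

Lemma dotvBl (R : realType) (k : nat) (x y z : 'rV[R]_k) :
  dotv (x - y) z = dotv x z - dotv y z.
Proof. by rewrite /dotv -sumrB; apply: eq_bigr => l _; rewrite !mxE mulrBl. Qed.

Section OrderedLogit.
Context {R : realType} {N M k : nat} {X : 'I_N -> 'I_N -> 'rV[R]_k}
  {alpha gamma : 'I_N -> R} {beta0 : 'rV[R]_k} {lam : nat -> R}.
Hypothesis M_gt0 : (0 < M)%N.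

Local Notation pmf := (@ologit_pmf R N M k X alpha gamma beta0 lam).
Local Notation v := (index_ij X alpha gamma beta0).
Local Notation Pr := (@Pr R N M k X alpha gamma beta0 lam).
Local Notation condPr := (@condPr R N M k X alpha gamma beta0 lam).

Definition ologit_tail (v : R) (c : nat) : R :=
  if c == 0%N then 1 else if (c <= M)%N then Lambda (v - lam c) else 0.

Lemma ologit_pmf_tail (i j : 'I_N) (m : 'I_M.+1) :
  pmf i j m = ologit_tail (v i j) m - ologit_tail (v i j) m.+1.
Proof.
have := ltn_ord m; rewrite ltnS /ologit_pmf /ologit_tail /= => m_le_M.
have [->|m_gt0] := eqVneq (m : nat) 0%N; first by rewrite M_gt0.
have [->|m_neq_M] := eqVneq (m : nat) M; first by rewrite ltnn leqnn subr0.
by rewrite m_le_M ltn_neqAle m_neq_M m_le_M.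
Qed.

Lemma sum_ologit_pmf_ge (i j : 'I_N) (c : nat) : (c <= M)%N ->
  \sum_(m : 'I_M.+1 | (c <= m)%N) pmf i j m = ologit_tail (v i j) c.
Proof.
move=> c_le_M; set tail := ologit_tail (v i j).
transitivity (\sum_(c <= m < M.+1) pmf i j (inord m)).
  by rewrite big_geq_mkord; apply: eq_bigr => m _; rewrite inord_val.
rewrite (telescope_sumr_eq (fun m => - tail m)) ?leqW // => [|m /andP[_ m_le_M]].
  by rewrite {1}/tail /ologit_tail ltnn /= oppr0 sub0r opprK.
by rewrite ologit_pmf_tail inordK // opprK addrC.
Qed.

Lemma sum_ologit_pmf (i j : 'I_N) : \sum_(m : 'I_M.+1) pmf i j m = 1.
Proof. by rewrite -[RHS](sum_ologit_pmf_ge i j (leq0n M)). Qed.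

Lemma ologit_prob_ge (i j : 'I_N) (c : nat) : (1 <= c <= M)%N ->
  \sum_(m : 'I_M.+1 | (c <= m)%N) pmf i j m = Lambda (v i j - lam c).
Proof.
case/andP=> c_gt0 c_le_M.
by rewrite sum_ologit_pmf_ge // /ologit_tail c_le_M eqn0Ngt c_gt0.
Qed.

Lemma ologit_prob_lt (i j : 'I_N) (c : nat) : (1 <= c <= M)%N ->
  \sum_(m : 'I_M.+1 | ~~ (c <= m)%N) pmf i j m = 1 - Lambda (v i j - lam c).
Proof.
move=> c_range; rewrite -(ologit_prob_ge i j c_range) -(sum_ologit_pmf i j).
by rewrite [in RHS](bigID (fun m : 'I_M.+1 => (c <= m)%N)) /= addrC addrK.
Qed.

Lemma eq_Pr (E F : pred (outcome N M)) : E =1 F -> Pr E = Pr F.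
Proof. exact: eq_bigl. Qed.

Lemma Pr_all_dyads (s : seq (dyad N * pred 'I_M.+1)) : uniq (unzip1 s) ->
  Pr (fun w => all (fun dP => dP.2 (w dP.1)) s)
  = \prod_(dP <- s) \sum_(m | dP.2 m) pmf (val dP.1).1 (val dP.1).2 m.
Proof.
move=> uniq_s.
apply: (sum_prod_all_pairs (p := fun d m => pmf (val d).1 (val d).2 m)) => // d.
exact: sum_ologit_pmf.
Qed.

Lemma condPr_disjU (A C : pred (outcome N M)) : (forall w, A w -> ~~ C w) ->
  condPr A (fun w => A w || C w) = Pr A / (Pr A + Pr C).
Proof.
move=> AC; rewrite /condPr (@eq_Pr _ A) => [|w]; last by case: (A w).
rewrite /Pr [X in _ / X](bigID A) /=; congr (_ / (_ + _)); apply: eq_bigl => w.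
  by case: (A w) => //=; rewrite andbF.
by case: (boolP (A w)) => [/AC/negbTE->|_]; rewrite ?andbF ?andbT.
Qed.

End OrderedLogit.

Lemma Yv_dyad (N M : nat) (w : outcome N M) (d : dyad N) :
  Yv w (val d).1 (val d).2 = w d.
Proof. by rewrite /Yv -surjective_pairing valK. Qed.

Lemma half_tetrad_diff_eq1 (R : realFieldType) (b11 b12 b21 b22 : bool) :
  (2^-1 * ((b11%:R - b12%:R) - (b21%:R - b22%:R)) == 1 :> R)
  = [&& b11, ~~ b12, ~~ b21 & b22].
Proof.
by case: b11; case: b12; case: b21; case: b22 => /=;
  first [apply/eqP; field | apply: lt_eqF; lra].
Qed.

Lemma half_tetrad_diff_eqN1 (R : realFieldType) (b11 b12 b21 b22 : bool) :
  (2^-1 * ((b11%:R - b12%:R) - (b21%:R - b22%:R)) == -1 :> R)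
  = [&& ~~ b11, b12, b21 & ~~ b22].
Proof.
by case: b11; case: b12; case: b21; case: b22 => /=;
  first [apply/eqP; field | apply: gt_eqF; lra].
Qed.

Theorem theorem3 (R : realType) (N M k : nat)
  (X : 'I_N -> 'I_N -> 'rV[R]_k) (alpha gamma : 'I_N -> R)
  (beta0 : 'rV[R]_k) (lam : nat -> R) :
  (4 <= N)%N -> (1 <= M)%N ->
  (forall a b : nat, (1 <= a)%N -> (a <= b)%N -> (b <= M)%N -> lam a <= lam b) ->
  forall i1 i2 j1 j2 : 'I_N, uniq [:: i1; i2; j1; j2] ->
  forall m11 m12 m21 m22 : nat,
    (1 <= m11 <= M)%N -> (1 <= m12 <= M)%N ->
    (1 <= m21 <= M)%N -> (1 <= m22 <= M)%N ->
  let Z := @Zsig R N M i1 i2 j1 j2 m11 m12 m21 m22 in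
  condPr X alpha gamma beta0 lam
    (fun w => Z w == 1)
    (fun w => (Z w == 1) || (Z w == -1))
  = Lambda (dotv (rsig X i1 i2 j1 j2) beta0 - lam0 lam m11 m12 m21 m22).
Proof.
move=> _ M_gt0 _ i1 i2 j1 j2 uniq_ij m11 m12 m21 m22 m11_M m12_M m21_M m22_M Z.
move: uniq_ij; rewrite /= !inE !negb_or.
case/andP=> /and3P[i12 i1j1 i1j2] /andP[/andP[i2j1 i2j2] /andP[j12 _]].
pose d11 : dyad N := Sub (i1, j1) i1j1; pose d12 : dyad N := Sub (i1, j2) i1j2.
pose d21 : dyad N := Sub (i2, j1) i2j1; pose d22 : dyad N := Sub (i2, j2) i2j2.
have uniq_d : uniq [:: d11; d12; d21; d22].
  by rewrite /= !inE -!val_eqE /= !xpair_eqE (negbTE i12) (negbTE j12) ?andbF.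
pose at_least c : pred 'I_M.+1 := fun m => (c <= m)%N.
pose below c : pred 'I_M.+1 := fun m => ~~ (c <= m)%N.
have Z_dyads w : Z w = 2^-1 * (((m11 <= w d11)%N%:R - (m12 <= w d12)%N%:R)
                             - ((m21 <= w d21)%N%:R - (m22 <= w d22)%N%:R)).
  by rewrite /Z /Zsig /Dv (Yv_dyad w d11) (Yv_dyad w d12) (Yv_dyad w d21) (Yv_dyad w d22).
have Z_eq1 w : (Z w == 1) = all (fun dP => dP.2 (w dP.1))
    [:: (d11, at_least m11); (d12, below m12); (d21, below m21); (d22, at_least m22)].
  by rewrite Z_dyads half_tetrad_diff_eq1 /= andbT.
have Z_eqN1 w : (Z w == -1) = all (fun dP => dP.2 (w dP.1))
    [:: (d11, below m11); (d12, at_least m12); (d21, at_least m21); (d22, below m22)].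
  by rewrite Z_dyads half_tetrad_diff_eqN1 /= andbT.
rewrite condPr_disjU => [|w /eqP ->]; last by rewrite gt_eqF //; lra.
rewrite (eq_Pr Z_eq1) (eq_Pr Z_eqN1) !Pr_all_dyads //.
rewrite !big_cons big_nil !mulr1 !mulrA /= !ologit_prob_ge // !ologit_prob_lt //.
by rewrite Lambda_odds_ratio /index_ij /rsig /lam0 !dotvBl; congr Lambda; ring.
Qed.
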